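(* A cyclic graph without a dominated vertex is isomorphic (as a directed graph) to $\overrightarrow{C_n^k}$ for some integers $0\le k<\frac12 n$. Consequently, every cyclic graph dismantles to an induced subgraph of the form $\overrightarrow{C_n^k}$.
   Context: A directed graph is a finite pair $(V,E)$, $E\subseteq V\times V$, with no loops and never both $(v,w),(w,v)\in E$; write $v\to w$. A cyclic graph is a directed graph whose vertices are arranged in a cyclic order $v_0\prec v_1\prec\cdots\prec v_{n-1}$ (indices mod $n$) such that whenever $v_i\to v_j$, either $j=i+1$ or both $v_i\to v_{j-1}$ and $v_{i+1}\to v_j$. For a vertex $v$, $N^-(\overrightarrow G,v)=\{w:w\to v\}$ and $N^-[\overrightarrow G,v]=N^-(\overrightarrow G,v)\cup\{v\}$. A vertex $v_i$ is dominated (by $v_{i+1}$) if $N^-(\overrightarrow G,v_{i+1})=N^-[\overrightarrow G,v_i]$. A cyclic graph $\overrightarrow G$ dismantles to an induced subgraph $\overrightarrow H$ if there is a sequence $\overrightarrow G=\overrightarrow G_0,\dots,\overrightarrow G_s=\overrightarrow H$ where each $\overrightarrow G_i$ is obtained from $\overrightarrow G_{i-1}$ (with the inherited cyclic order) by removing a dominated vertex. For integers $0\le k<n/2$, $\overrightarrow{C_n^k}$ is the directed graph on $\{0,\dots,n-1\}$ with $i\to j$ iff $0<(j-i)\bmod n\le k$. *)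

From mathcomp Require Import all_boot.
Set Implicit Arguments. Unset Strict Implicit. Unset Printing Implicit Defensive.

(* A cyclic graph with n vertices is represented on the vertex set 'I_n, the
   cyclic order being v_0 < v_1 < ... < v_(n-1) (indices mod n).  Induced
   subgraphs are given by subsets S of 'I_n and carry the inherited cyclic
   order, i.e. the elements of S listed increasingly, viewed as a cycle. *)

Definition digraph n (E : rel 'I_n) : Prop :=
  (forall x, ~~ E x x) /\ (forall x y, E x y -> ~~ E y x).

Definition cyc_seq n (S : {set 'I_n}) : seq 'I_n := [seq x <- enum 'I_n | x \in S].

Definition csucc n (S : {set 'I_n}) (v : 'I_n) : 'I_n := next (cyc_seq S) v.
Definition cpred n (S : {set 'I_n}) (v : 'I_n) : 'I_n := prev (cyc_seq S) v.

Definition cyclic_graph n (E : rel 'I_n) (S : {set 'I_n}) : Prop :=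
  forall x y, x \in S -> y \in S -> E x y ->
    y = csucc S x \/ (E x (cpred S y) /\ E (csucc S x) y).

Definition in_nbhd n (E : rel 'I_n) (S : {set 'I_n}) (v : 'I_n) : {set 'I_n} :=
  [set w in S | E w v].

Definition dominated n (E : rel 'I_n) (S : {set 'I_n}) (v : 'I_n) : Prop :=
  v \in S /\ in_nbhd E S (csucc S v) = v |: in_nbhd E S v.

Inductive dismantles n (E : rel 'I_n) : {set 'I_n} -> {set 'I_n} -> Prop :=
| dism_refl S : dismantles E S S
| dism_step S v T : dominated E S v -> dismantles E (S :\ v) T -> dismantles E S T.

Definition circ m (k : nat) (i j : 'I_m) : bool :=
  (0 < (j + (m - i)) %% m) && ((j + (m - i)) %% m <= k).

From mathcomp Require Import all_boot zify.
Set Implicit Arguments. Unset Strict Implicit. Unset Printing Implicit Defensive.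

(* If [x -> y] in a cyclic graph and [y] is not the successor of [x], then
   [succ x -> y] and [x -> pred y]; iterating, the in-neighbourhood of every
   vertex [y] is the block of the [in_radius y] vertices preceding it.  One
   step forward, the in-radius grows by at most one, and it grows by exactly
   one precisely when the in-neighbourhood of [succ v] is that of [v] plus
   [v], i.e. when [v] is dominated.  So without dominated vertices it is
   non-increasing around the cycle, hence constant, say [k]; the graph is
   then [C_n^k], and [2k < n] because no two vertices are joined both ways.
   Deleting a vertex keeps the graph cyclic for the inherited order, so
   deleting dominated vertices while possible ends in an undominated induced
   subgraph, which is [C_m^k] once its vertices are numbered in cyclic order. *)

Lemma next_nth_uniq (T : eqType) (x0 : T) (s : seq T) i : uniq s -> i < size s ->
  next s (nth x0 s i) = nth x0 s (i.+1 %% size s).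
Proof.
move=> s_uniq lt_i_s; rewrite next_nth mem_nth // index_uniq //.
case: s s_uniq lt_i_s => [|y p] //= _ lt_i_p.
have [lt_Si_p | ge_Si_p] := ltnP i.+1 (size p).+1.
  by rewrite modn_small //=; apply: set_nth_default.
have -> : i = size p by lia.
by rewrite modnn nth_default.
Qed.

Section InheritedOrder.
Variables (n : nat) (S : {set 'I_n}).

Lemma cyc_seqE : cyc_seq S = enum S.
Proof. by rewrite /cyc_seq enumT. Qed.

Lemma mem_cyc_seq x : (x \in cyc_seq S) = (x \in S).
Proof. by rewrite cyc_seqE mem_enum. Qed.

Lemma cyc_seq_uniq : uniq (cyc_seq S).
Proof. by rewrite cyc_seqE enum_uniq. Qed.

Lemma ltn_nth_cyc_seq x0 a b : a < size (cyc_seq S) -> b < size (cyc_seq S) ->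
  (nth x0 (cyc_seq S) a < nth x0 (cyc_seq S) b) = (a < b).
Proof.
have sorted_S : sorted (fun a b : 'I_n => a < b) (cyc_seq S).
  apply: sorted_filter; first exact: ltn_trans.
  by have := iota_ltn_sorted 0 n; rewrite -val_enum_ord sorted_map.
move=> lt_a lt_b.
have lt_nth := @sorted_ltn_nth _ _ (fun y x z : 'I_n => @ltn_trans y x z) x0 _ sorted_S.
have [lt_ab | lt_ba | ->] := ltngtP a b; last by rewrite ltnn.
- by apply: lt_nth.
- by apply/negbTE; rewrite -leqNgt ltnW //; apply: lt_nth.
Qed.

Lemma csucc_in x : x \in S -> csucc S x \in S.
Proof. by rewrite /csucc -!mem_cyc_seq mem_next. Qed.

Lemma cpred_in x : x \in S -> cpred S x \in S.
Proof. by rewrite /cpred -!mem_cyc_seq mem_prev. Qed.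

Lemma cpred_csucc x : cpred S (csucc S x) = x.
Proof. exact/prev_next/cyc_seq_uniq. Qed.

Lemma csucc_cpred x : csucc S (cpred S x) = x.
Proof. exact/next_prev/cyc_seq_uniq. Qed.

End InheritedOrder.

(* [cdist i j] is the number of forward steps from [i] to [j] around the
   cycle; [circ k i j] unfolds to [0 < cdist i j <= k]. *)
Definition cdist n (i j : 'I_n) : nat := (j + (n - i)) %% n.

Lemma cdistE n (i j : 'I_n) : cdist i j = if i <= j then j - i else j + n - i.
Proof.
have := ltn_ord i; have := ltn_ord j; rewrite /cdist.
case: (leqP i j) => [le_ij | lt_ji] lt_j lt_i; last by rewrite modn_small; lia.
rewrite (_ : j + (n - i) = (j - i) + n); last by lia.
by rewrite modnDr modn_small //; lia.
Qed.

(* Closes arithmetic goals about [cdist] once the bounds [ltn_ord] of the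
   ordinals involved are in the goal. *)
Ltac cdist_lia := rewrite ?cdistE /=; do ?[case: ifP => ?]; lia.

Section CyclicDistance.
Variable n : nat.
Implicit Types i j x y : 'I_n.

Lemma cdist_lt i j : cdist i j < n.
Proof. by have := ltn_ord i; have := ltn_ord j; cdist_lia. Qed.

Lemma cdist_eq0 i j : (cdist i j == 0) = (i == j).
Proof. by rewrite -val_eqE /=; have := ltn_ord i; have := ltn_ord j; cdist_lia. Qed.

Lemma cdistxx x : cdist x x = 0.
Proof. by apply/eqP; rewrite cdist_eq0. Qed.

Lemma cdistC x y : x != y -> cdist y x = n - cdist x y.
Proof. by rewrite -val_eqE /= => xy; have := ltn_ord x; have := ltn_ord y; cdist_lia. Qed.

Lemma cdist_inj x : injective (cdist x).
Proof.
move=> y1 y2 eq_d; apply: val_inj => /=; move: eq_d.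
by have := ltn_ord x; have := ltn_ord y1; have := ltn_ord y2; cdist_lia.
Qed.

Lemma cdist_injl y : injective (fun x => cdist x y).
Proof.
move=> x1 x2 eq_d; apply: val_inj => /=; move: eq_d.
by have := ltn_ord x1; have := ltn_ord x2; have := ltn_ord y; cdist_lia.
Qed.

End CyclicDistance.

Lemma csucc_closest n (S : {set 'I_n}) x z : x \in S -> z \in S -> z != x ->
  0 < cdist x (csucc S x) <= cdist x z.
Proof.
move=> xS zS zx; set s := cyc_seq S.
have [xs zs] : x \in s /\ z \in s by rewrite !mem_cyc_seq.
have [lt_i lt_j] : index x s < size s /\ index z s < size s by rewrite !index_mem.
have ne_ji : index z s != index x s.
  by apply: contra zx => /eqP eq_ji; rewrite -(nth_index x zs) eq_ji nth_index.
rewrite /csucc -/s -(nth_index x xs) next_nth_uniq ?cyc_seq_uniq //.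
rewrite -[in cdist _ z](nth_index x zs).
move: (index x s) (index z s) lt_i lt_j ne_ji => i j lt_i lt_j ne_ji.
have lt_nth a b : a < size s -> b < size s -> (nth x s a < nth x s b <-> a < b).
  by move=> lt_a lt_b; rewrite ltn_nth_cyc_seq.
have := ltn_ord (nth x s i); have := ltn_ord (nth x s j).
have [lt_Si | ge_Si] := ltnP i.+1 (size s).
  have := ltn_ord (nth x s i.+1); rewrite modn_small //.
  have := lt_nth _ _ lt_i lt_Si; have := lt_nth _ _ lt_j lt_i.
  have := lt_nth _ _ lt_j lt_Si; have := lt_nth _ _ lt_Si lt_j.
  move: (nth x s i) (nth x s j) (nth x s i.+1) => a b c; cdist_lia.
have lt_0 : 0 < size s by lia.
have := ltn_ord (nth x s 0); rewrite (_ : i.+1 = size s) ?modnn; last by lia.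
have := lt_nth _ _ lt_0 lt_i; have := lt_nth _ _ lt_j lt_i.
have := lt_nth _ _ lt_j lt_0; have := lt_nth _ _ lt_0 lt_j.
move: (nth x s i) (nth x s j) (nth x s 0) => a b c; cdist_lia.
Qed.

Lemma eq_csucc_closest n (S : {set 'I_n}) x c : x \in S -> c \in S ->
  (forall z, z \in S -> z != x -> 0 < cdist x c <= cdist x z) -> c = csucc S x.
Proof.
move=> xS cS c_closest; have sxS := csucc_in xS.
have [sx_x | sx_x] := eqVneq (csucc S x) x.
  apply/eqP; apply: contraT; rewrite sx_x => /(csucc_closest xS cS).
  by rewrite sx_x cdistxx.
have /andP [c_pos le_c_sx] := c_closest _ sxS sx_x.
have c_x : c != x by rewrite eq_sym -cdist_eq0 -lt0n.
have /andP [_ le_sx_c] := csucc_closest xS cS c_x.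
by apply: (@cdist_inj _ x); apply/eqP; rewrite eqn_leq le_c_sx le_sx_c.
Qed.

Lemma csucc_setD1 n (S : {set 'I_n}) v x : v \in S -> x \in S -> x != v ->
  csucc (S :\ v) x = if csucc S x == v then csucc S v else csucc S x.
Proof.
move=> vS xS xv; have xS' : x \in S :\ v by rewrite !inE xv.
have /andP [sv_pos _] := csucc_closest vS xS xv.
have sv_v : csucc S v != v by rewrite eq_sym -cdist_eq0 -lt0n.
symmetry; apply: eq_csucc_closest => //.
  by case: ifP => sx_v; rewrite !inE ?sx_v ?sv_v csucc_in.
move=> z; rewrite !inE => /andP [zv zS] zx.
have [sx_v | sx_v] := eqVneq (csucc S x) v; last exact: csucc_closest.
have := csucc_closest xS zS zx; have := csucc_closest vS zS zv; rewrite sx_v.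
have [sv_x | sv_x] := eqVneq (csucc S v) x.
  rewrite sv_x; move: zv zx xv; rewrite -!val_eqE /=.
  by have := ltn_ord x; have := ltn_ord v; have := ltn_ord z; cdist_lia.
have := csucc_closest xS (csucc_in vS) sv_x; rewrite sx_v.
move: (csucc S v) sv_v sv_x => s; move: zv zx xv; rewrite -!val_eqE /=.
by have := ltn_ord x; have := ltn_ord v; have := ltn_ord z; have := ltn_ord s; cdist_lia.
Qed.

Lemma cpred_setD1 n (S : {set 'I_n}) v y : v \in S -> y \in S -> y != v ->
  cpred (S :\ v) y = if cpred S y == v then cpred S v else cpred S y.
Proof.
move=> vS yS yv.
set p := if cpred S y == v then _ else _.
suff <- : csucc (S :\ v) p = y by rewrite cpred_csucc.
have [py_v | py_v] := eqVneq (cpred S y) v; rewrite /p ?py_v ?eqxx.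
  have pv_v : cpred S v != v.
    by apply: contraNneq yv => pv; rewrite -(csucc_cpred S y) py_v -{1}pv csucc_cpred.
  by rewrite csucc_setD1 ?cpred_in // csucc_cpred eqxx -py_v csucc_cpred.
by rewrite (negbTE py_v) csucc_setD1 ?cpred_in // csucc_cpred (negbTE yv).
Qed.

Lemma cyclic_graph_setD1 n (E : rel 'I_n) (S : {set 'I_n}) v :
  cyclic_graph E S -> v \in S -> cyclic_graph E (S :\ v).
Proof.
move=> cycS vS x y; rewrite !inE => /andP [xv xS] /andP [yv yS] Exy.
rewrite csucc_setD1 // cpred_setD1 //.
case: (cycS x y xS yS Exy) => [y_sx | [Ex_py Esx_y]].
  by left; rewrite -y_sx (negbTE yv).
have [sx_v | sx_v] := eqVneq (csucc S x) v.
  have [-> | y_sv] := eqVneq y (csucc S v); first by left.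
  right; split.
    by case: eqP => // py_v; case/eqP: y_sv; rewrite -py_v csucc_cpred.
  rewrite sx_v in Esx_y.
  by case: (cycS v y vS yS Esx_y) => [y_sv' | []] //; rewrite y_sv' eqxx in y_sv.
right; split => //.
case: eqP => // py_v; rewrite py_v in Ex_py.
by case: (cycS x v xS vS Ex_py) => [sx_v' | []] //; rewrite sx_v' eqxx in sx_v.
Qed.

Section FullCycle.
Variable n : nat.
Local Notation sc := (csucc [set: 'I_n]).
Local Notation pc := (cpred [set: 'I_n]).

Lemma val_csucc_setT x : val (sc x) = x.+1 %% n.
Proof.
have cyc_setT : cyc_seq [set: 'I_n] = enum 'I_n.
  by rewrite /cyc_seq (eq_filter (a2 := predT)) ?filter_predT // => z; rewrite in_setT.
have lt_x := ltn_ord x; have lt_Sx : x.+1 %% n < n by apply: ltn_pmod; lia.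
rewrite /csucc cyc_setT -{1}(nth_ord_enum x x).
by rewrite next_nth_uniq ?enum_uniq ?size_enum_ord //= nth_enum_ord.
Qed.

Lemma val_csucc_setT_if x : val (sc x) = if x.+1 < n then x.+1 else 0.
Proof.
rewrite val_csucc_setT; case: ifPn => [lt_Sx | ]; first by rewrite modn_small.
have := ltn_ord x; rewrite -leqNgt => lt_x ge_Sx.
by rewrite (_ : x.+1 = n) ?modnn //; lia.
Qed.

Lemma val_iter_csucc_setT j x : val (iter j sc x) = (x + j) %% n.
Proof.
elim: j => [|j IHj] /=; first by rewrite addn0 modn_small.
by rewrite val_csucc_setT IHj -addn1 modnDml addn1 addnS.
Qed.

Lemma iter_csucc_cdist x y : iter (cdist x y) sc x = y.
Proof.
apply: val_inj; rewrite val_iter_csucc_setT /cdist modnDmr /=.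
have lt_x := ltn_ord x; have lt_y := ltn_ord y.
by rewrite addnCA subnKC ?modnDr ?modn_small //; lia.
Qed.

Lemma cdist_csucc_setT x y : 0 < cdist x y -> cdist (sc x) y = (cdist x y).-1.
Proof.
have := val_csucc_setT_if x; move: (sc x) => s.
by have := ltn_ord x; have := ltn_ord y; have := ltn_ord s; cdist_lia.
Qed.

Lemma cdist_cpred_setT x y : 0 < cdist x y -> cdist x (pc y) = (cdist x y).-1.
Proof.
have := val_csucc_setT_if (pc y); rewrite csucc_cpred; move: (pc y) => p.
by have := ltn_ord x; have := ltn_ord y; have := ltn_ord p; cdist_lia.
Qed.

Lemma cdist_iter_csucc_setT j x : j < n -> cdist x (iter j sc x) = j.
Proof.
move=> lt_j; have lt_x := ltn_ord x.
rewrite /cdist val_iter_csucc_setT modnDml -addnA addnCA subnKC ?modnDr ?modn_small //.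
lia.
Qed.

End FullCycle.

Definition in_radius n (E : rel 'I_n) (y : 'I_n) : nat := \max_(w | E w y) cdist w y.

Section CyclicGraphOnCycle.
Variables (n : nat) (E : rel 'I_n).
Hypothesis E_digraph : digraph E.
Hypothesis E_cyclic : cyclic_graph E [set: 'I_n].
Local Notation sc := (csucc [set: 'I_n]).
Local Notation pc := (cpred [set: 'I_n]).
Local Notation radius := (in_radius E).

Lemma edge_shrink x y : E x y -> 1 < cdist x y -> E (sc x) y /\ E x (pc y).
Proof.
move=> Exy gt1_xy.
case: (E_cyclic (in_setT x) (in_setT y) Exy) => [y_sx | [Ex_py Esx_y]]; last by split.
move: gt1_xy; rewrite y_sx; have := val_csucc_setT_if x; move: (sc x) => s.
by have := ltn_ord x; have := ltn_ord s; cdist_lia.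
Qed.

Lemma edge_of_cdist_le x y z : E x y -> 0 < cdist z y <= cdist x y -> E z y.
Proof.
move d_xy: (cdist x y) => d; elim: d x d_xy => [|d IHd] x d_xy Exy z_in.
  by lia.
have [z_eq | z_ne] := eqVneq (cdist z y) d.+1.
  by rewrite (cdist_injl (etrans z_eq (esym d_xy))).
have gt1_xy : 1 < cdist x y by lia.
have [Esx_y _] := edge_shrink Exy gt1_xy.
by apply: (IHd (sc x)) => //; [rewrite cdist_csucc_setT d_xy | lia].
Qed.

Lemma in_radius_lt y : radius y < n.
Proof.
have : radius y <= n.-1 by apply/bigmax_leqP => w _; have := cdist_lt w y; lia.
by have := ltn_ord y; lia.
Qed.

Lemma in_radius_witness y : 0 < radius y -> exists2 w, E w y & cdist w y = radius y.
Proof.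
rewrite /in_radius; case: (pickP (E ^~ y)) => [w0 Ew0 _ | noE]; last by rewrite big_pred0.
rewrite (bigmax_eq_arg w0) //; case: arg_maxnP => // w Ew _.
by exists w.
Qed.

Lemma edgeE w y : E w y = (0 < cdist w y <= radius y).
Proof.
apply/idP/andP => [Ewy | [pos_wy le_wy]].
  split; last exact: leq_bigmax_cond.
  by rewrite lt0n cdist_eq0; apply: contraTneq Ewy => ->; case: E_digraph.
have [u Euy d_uy] := in_radius_witness (leq_trans pos_wy le_wy).
by apply: edge_of_cdist_le Euy _; rewrite pos_wy d_uy.
Qed.

Lemma in_radius_csucc_le v : radius (sc v) <= (radius v).+1.
Proof.
have [le1 | gt1] := leqP (radius (sc v)) 1; first by lia.
have [w Ew d_w] := in_radius_witness (ltnW gt1).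
have gt1_w : 1 < cdist w (sc v) by rewrite d_w.
have d_wv : cdist w v = (radius (sc v)).-1.
  by rewrite -{1}(cpred_csucc [set: 'I_n] v) cdist_cpred_setT d_w //; lia.
have [_] := edge_shrink Ew gt1_w; rewrite cpred_csucc edgeE d_wv.
by lia.
Qed.

Lemma dominated_of_in_radius_csucc v :
  radius (sc v) = (radius v).+1 -> dominated E [set: 'I_n] v.
Proof.
move=> radius_sv; split; first exact: in_setT.
apply/setP => y; rewrite !inE !edgeE radius_sv.
have := in_radius_lt (sc v); rewrite radius_sv; move: (radius v) => k.
have := val_csucc_setT_if v; move: (sc v) => s; rewrite -val_eqE /=.
by have := ltn_ord v; have := ltn_ord y; have := ltn_ord s; cdist_lia.
Qed.

Hypothesis E_undominated : forall v, ~ dominated E [set: 'I_n] v.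

Lemma in_radius_csucc v : radius (sc v) <= radius v.
Proof.
have := in_radius_csucc_le v; rewrite leq_eqVlt ltnS => /orP [/eqP radius_sv |] //.
by case: (E_undominated (dominated_of_in_radius_csucc radius_sv)).
Qed.

Lemma in_radius_const u v : radius u = radius v.
Proof.
have radius_iter x j : radius (iter j sc x) <= radius x.
  by elim: j => //= j IHj; apply: leq_trans (in_radius_csucc _) IHj.
have := radius_iter v (cdist v u); have := radius_iter u (cdist u v).
by rewrite !iter_csucc_cdist; lia.
Qed.

Lemma circ_of_undominated (x0 : 'I_n) : exists k, 2 * k < n /\ forall x y, E x y = circ k x y.
Proof.
exists (radius x0); split; last by move=> x y; rewrite edgeE (in_radius_const y x0).
rewrite ltnNge; apply/negP => le_n_2k; set k := radius x0 in le_n_2k.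
have lt_k := in_radius_lt x0; pose y := iter k sc x0.
have d_y : cdist x0 y = k by rewrite cdist_iter_csucc_setT.
have y_x0 : x0 != y by rewrite -cdist_eq0 d_y; have := ltn_ord x0; lia.
have Ex0y : E x0 y by rewrite edgeE d_y (in_radius_const y x0); lia.
have Eyx0 : E y x0 by rewrite edgeE (cdistC y_x0) d_y; lia.
by case: E_digraph => _ /(_ _ _ Ex0y); rewrite Eyx0.
Qed.
End CyclicGraphOnCycle.

Lemma digraph_relpre n m (f : 'I_m -> 'I_n) (E : rel 'I_n) :
  digraph E -> digraph (relpre f E).
Proof. by case=> E_irr E_asym; split=> [x | x y]; [apply: E_irr | apply: E_asym]. Qed.

Section Relabel.
Variables (n : nat) (S : {set 'I_n}) (x0 : 'I_n).
Local Notation m := (size (cyc_seq S)).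

Definition relabel (i : 'I_m) : 'I_n := nth x0 (cyc_seq S) i.

Lemma relabel_in i : relabel i \in S.
Proof. by rewrite -mem_cyc_seq mem_nth. Qed.

Lemma relabel_inj : injective relabel.
Proof. by move=> i j /eqP; rewrite nth_uniq ?cyc_seq_uniq // => /eqP /val_inj. Qed.

Lemma relabel_onto : S = [set relabel i | i : 'I_m].
Proof.
apply/setP => y; apply/idP/imsetP => [yS | [i _ ->]]; last exact: relabel_in.
have ys : y \in cyc_seq S by rewrite mem_cyc_seq.
by exists (Ordinal (etrans (index_mem y _) ys)); rewrite // /relabel nth_index.
Qed.

Lemma csucc_relabel i : csucc S (relabel i) = relabel (csucc [set: 'I_m] i).
Proof. by rewrite /csucc next_nth_uniq ?cyc_seq_uniq // -val_csucc_setT. Qed.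

Lemma cpred_relabel i : cpred S (relabel i) = relabel (cpred [set: 'I_m] i).
Proof. by rewrite -{1}(csucc_cpred [set: 'I_m] i) -csucc_relabel cpred_csucc. Qed.

Variable E : rel 'I_n.

Lemma cyclic_graph_relabel :
  cyclic_graph E S -> cyclic_graph (relpre relabel E) [set: 'I_m].
Proof.
move=> cycS i j _ _ /= Eij.
case: (cycS _ _ (relabel_in i) (relabel_in j) Eij) => [| [] ].
  by rewrite csucc_relabel => /relabel_inj ->; left.
by rewrite csucc_relabel cpred_relabel; right.
Qed.

Lemma dominated_relabel i :
  dominated (relpre relabel E) [set: 'I_m] i -> dominated E S (relabel i).
Proof.
move=> [_ /setP dom_i]; split; first exact: relabel_in.
apply/setP => y; rewrite !inE; have [yS | yS] := boolP (y \in S); last first.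
  by rewrite /= orbF; apply/esym/negbTE; apply: contraNneq yS => ->; apply: relabel_in.
have /imsetP [j _ ->] : y \in [set relabel j | j : 'I_m] by rewrite -relabel_onto.
by have := dom_i j; rewrite !inE /= (inj_eq relabel_inj) csucc_relabel.
Qed.

End Relabel.

Lemma circ_of_undominated_subset n (E : rel 'I_n) (S : {set 'I_n}) x0 :
  x0 \in S -> digraph E -> cyclic_graph E S -> (forall v, ~ dominated E S v) ->
  exists m k (f : 'I_m -> 'I_n), 2 * k < m /\ injective f /\
    S = [set f i | i : 'I_m] /\ forall i j, E (f i) (f j) = circ k i j.
Proof.
move=> x0S E_digraph E_cyclic E_undominated.
have i0_lt : index x0 (cyc_seq S) < size (cyc_seq S) by rewrite index_mem mem_cyc_seq.
have [k [lt_2k E_circ]] := circ_of_undominated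
  (digraph_relpre (@relabel n S x0) E_digraph) (cyclic_graph_relabel (x0 := x0) E_cyclic)
  (fun i dom_i => @E_undominated _ (dominated_relabel dom_i)) (Ordinal i0_lt).
exists _, k, (@relabel n S x0).
by do ![split] => //; [exact: relabel_inj | exact: relabel_onto].
Qed.

Lemma dominated_csucc_neq n (E : rel 'I_n) (S : {set 'I_n}) v :
  digraph E -> dominated E S v -> csucc S v != v.
Proof.
case=> E_irr _ [vS /setP dom_v]; apply/eqP => sv_v.
by have := dom_v v; rewrite sv_v !inE eqxx vS /= (negbTE (E_irr v)).
Qed.

Definition dominatedb n (E : rel 'I_n) (S : {set 'I_n}) (v : 'I_n) : bool :=
  (v \in S) && (in_nbhd E S (csucc S v) == v |: in_nbhd E S v).

Lemma dominatedP n (E : rel 'I_n) (S : {set 'I_n}) v :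
  reflect (dominated E S v) (dominatedb E S v).
Proof. by apply: (iffP andP) => [[vS /eqP] | [vS ->]]. Qed.

Lemma dismantles_to_undominated n (E : rel 'I_n) (S : {set 'I_n}) x :
  digraph E -> cyclic_graph E S -> x \in S ->
  exists T, [/\ dismantles E S T, cyclic_graph E T,
    forall v, ~ dominated E T v & exists y, y \in T].
Proof.
move=> E_digraph; have [N] := ubnP #|S|; elim: N S x => // N IHN S x ltSN cycS xS.
case: (pickP (dominatedb E S)) => [v /dominatedP v_dom | undom]; last first.
  by exists S; split=> [||v /dominatedP|]; [exact: dism_refl | | rewrite undom | exists x].
have vS := v_dom.1; have svS : csucc S v \in S :\ v.
  by rewrite !inE (dominated_csucc_neq E_digraph v_dom) csucc_in.
have ltSN' : #|S :\ v| < N by move: ltSN; rewrite (cardsD1 v S) vS.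
have [T [dT cycT undomT neT]] := IHN _ _ ltSN' (cyclic_graph_setD1 cycS vS) svS.
by exists T; split => //; apply: dism_step v_dom dT.
Qed.

Theorem proposition3p12 (n : nat) (E : rel 'I_n) :
  0 < n -> digraph E -> cyclic_graph E [set: 'I_n] ->
  ((forall v, ~ dominated E [set: 'I_n] v) ->
     exists k, 2 * k < n /\
       exists f : 'I_n -> 'I_n, bijective f /\
         forall x y, E x y = circ k (f x) (f y))
  /\
  (exists S : {set 'I_n}, dismantles E [set: 'I_n] S /\
     exists m k (f : 'I_m -> 'I_n), 2 * k < m /\ injective f /\
       S = [set f i | i : 'I_m] /\
       forall i j, E (f i) (f j) = circ k i j).
Proof.
move=> n_gt0 E_digraph E_cyclic; pose x0 := Ordinal n_gt0; split.
  move=> E_undominated.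
  have [k [lt_2k E_circ]] := circ_of_undominated E_digraph E_cyclic E_undominated x0.
  by exists k; split => //; exists id; split => //; exists id.
have [T [dT cycT T_undominated [x xT]]] :=
  dismantles_to_undominated E_digraph E_cyclic (in_setT x0).
by exists T; split => //; apply: circ_of_undominated_subset xT E_digraph cycT T_undominated.
Qed.
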